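(* There is an absolute constant $c_0>0$ such that the following holds. Let $d\in\mathbb N_+$ and $0<\varepsilon\le c_0$. Let $Y=X+Z$ where $X\sim\mathrm{Bin}(d-1,1/2)$ and $Z\sim\mathrm{DLap}(1/\varepsilon)$ are independent. Then $$\Pr\left[Y=\left\lceil\frac{d-1}2\right\rceil\right]\ \ge\ \Omega\left(\frac1{\sqrt{d+1/\varepsilon^2}}\right),$$ with an absolute hidden constant.
   Context: $\mathrm{DLap}(1/\varepsilon)$ denotes the discrete Laplace distribution on $\mathbb Z$ with probability mass $\frac{e^\varepsilon-1}{e^\varepsilon+1}e^{-\varepsilon|x|}$ at $x\in\mathbb Z$. *)

From Stdlib Require Import Reals ZArith Arith.
Open Scope R_scope.

Definition binom_half_pmf (n x : nat) : R := C n x / 2 ^ n.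

(* pmf of DLap(1/eps) at z : (e^eps - 1)/(e^eps + 1) * e^{-eps |z|}. *)
Definition dlap_pmf (eps : R) (z : Z) : R :=
  (exp eps - 1) / (exp eps + 1) * exp (- eps * Rabs (IZR z)).

(* Pr[X + Z = k] for independent X ~ Bin(d-1,1/2), Z ~ DLap(1/eps):
   the convolution  sum_{x=0}^{d-1} Pr[X=x] Pr[Z=k-x]
   (sum_f_R0 f n sums f 0 + ... + f n). *)
Definition prob_Y_eq (d : nat) (eps : R) (k : Z) : R :=
  sum_f_R0 (fun x => binom_half_pmf (d - 1) x * dlap_pmf eps (k - Z.of_nat x)%Z)
           (d - 1).

Definition ceil_half (n : nat) : nat := Nat.div (n + 1) 2.

(** Write n = d - 1 and m = floor(n/2). The central probability b = Pr[X = m]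
    satisfies b^2 (n + 1) >= 1/3 (a Wallis-type product bound), and
    Pr[X = m + j] >= 3b/4 whenever 4 j^2 <= m + 1. Take the largest radius t with
    4 t^2 <= m + 1 and eps t <= 1: on the window m, ..., m + t the Laplace factor is
    at least (eps/3) e^-2, so Pr[Y = ceil(n/2)] >= (t + 1) eps b e^-2 / 4. By
    maximality either eps (t + 1) > 1 or (t + 1)^2 > (n + 1)/8, and in both cases
    (t + 1)^2 b^2 (eps^2 d + 1) >= 1/24, which is the claim. *)

From Stdlib Require Import Reals ZArith Arith Lra Lia Psatz Classical.
Open Scope R_scope.

Lemma C_pos n k : 0 < C n k.
Proof.
  unfold C.
  pose proof (INR_fact_lt_0 n); pose proof (INR_fact_lt_0 k);
    pose proof (INR_fact_lt_0 (n - k)).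
  apply Rdiv_lt_0_compat; nra.
Qed.

Lemma exp_le_compat x y : x <= y -> exp x <= exp y.
Proof.
  intros [Hlt|Heq]; [apply Rlt_le, exp_increasing, Hlt | rewrite Heq; apply Rle_refl].
Qed.

Lemma binom_half_pmf_pos n k : 0 < binom_half_pmf n k.
Proof. apply Rdiv_lt_0_compat; [apply C_pos | apply pow_lt; lra]. Qed.

Lemma binom_half_pmf_odd_central m :
  binom_half_pmf (2 * m + 1) m
  = (2 * INR m + 1) / (2 * INR m + 2) * binom_half_pmf (2 * m) m.
Proof.
  unfold binom_half_pmf.
  replace (2 * m + 1)%nat with (S (2 * m)) by lia.
  rewrite pascal_step2 by lia.
  replace (S (2 * m) - m)%nat with (S m) by lia.
  change (2 ^ S (2 * m)) with (2 * 2 ^ (2 * m)).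
  rewrite !S_INR, mult_INR; simpl INR.
  pose proof (pos_INR m); pose proof (pow_lt 2 (2 * m) ltac:(lra)).
  field; lra.
Qed.

Lemma binom_half_pmf_even_central m :
  binom_half_pmf (2 * m + 2) (m + 1) = binom_half_pmf (2 * m + 1) m.
Proof.
  unfold binom_half_pmf.
  replace (2 * m + 2)%nat with (S (2 * m + 1)) by lia.
  rewrite pascal_step2, (pascal_step1 (2 * m + 1) (m + 1)) by lia.
  replace (2 * m + 1 - (m + 1))%nat with m by lia.
  replace (S (2 * m + 1) - (m + 1))%nat with (S m) by lia.
  change (2 ^ S (2 * m + 1)) with (2 * 2 ^ (2 * m + 1)).
  rewrite !S_INR, plus_INR, mult_INR; simpl INR.
  pose proof (pos_INR m); pose proof (pow_lt 2 (2 * m + 1) ltac:(lra)).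
  field; lra.
Qed.

Lemma binom_half_pmf_central_even_sq m :
  binom_half_pmf (2 * m) m ^ 2 * (4 * INR m + 1) >= 1.
Proof.
  induction m as [|m IH].
  - unfold binom_half_pmf, C; simpl; lra.
  - replace (2 * S m)%nat with (2 * m + 2)%nat by lia.
    replace (S m) with (m + 1)%nat at 1 by lia.
    rewrite binom_half_pmf_even_central, binom_half_pmf_odd_central, S_INR.
    pose proof (pos_INR m).
    set (b := binom_half_pmf (2 * m) m) in *; set (M := INR m) in *.
    apply Rle_ge, Rmult_le_reg_r with ((2 * M + 2) ^ 2); [nra|].
    replace (((2 * M + 1) / (2 * M + 2) * b) ^ 2 * (4 * (M + 1) + 1) * (2 * M + 2) ^ 2)
      with ((2 * M + 1) ^ 2 * (4 * M + 5) * b ^ 2) by (field; lra).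
    assert (Hgrowth : (4 * M + 1) * (2 * M + 2) ^ 2 <= (2 * M + 1) ^ 2 * (4 * M + 5)) by nra.
    assert (0 <= b ^ 2) by nra.
    nra.
Qed.

Lemma binom_half_pmf_central_sq n m :
  (2 * m <= n <= 2 * m + 1)%nat -> binom_half_pmf n m ^ 2 * (INR n + 1) >= 1/3.
Proof.
  intros Hn.
  pose proof (binom_half_pmf_central_even_sq m) as Heven; pose proof (pos_INR m).
  assert (Hb2 : 0 <= binom_half_pmf (2 * m) m ^ 2) by nra.
  destruct (Nat.eq_dec n (2 * m)) as [->|Hodd].
  - rewrite mult_INR; replace (INR 2) with 2 by (simpl; lra). nra.
  - replace n with (2 * m + 1)%nat by lia.
    rewrite binom_half_pmf_odd_central, plus_INR, mult_INR.
    replace (INR 2) with 2 by (simpl; lra); replace (INR 1) with 1 by reflexivity.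
    set (b := binom_half_pmf (2 * m) m) in *; set (M := INR m) in *.
    replace (((2 * M + 1) / (2 * M + 2) * b) ^ 2 * (2 * M + 1 + 1))
      with ((2 * M + 1) ^ 2 * b ^ 2 / (2 * M + 2)) by (field; lra).
    apply Rle_ge, Rmult_le_reg_r with (2 * M + 2); [lra|].
    replace ((2 * M + 1) ^ 2 * b ^ 2 / (2 * M + 2) * (2 * M + 2))
      with ((2 * M + 1) ^ 2 * b ^ 2) by (field; lra).
    nra.
Qed.

Lemma binom_half_pmf_shift_ge n m j :
  (2 * m <= n)%nat -> (4 * j * j <= m + 1)%nat ->
  binom_half_pmf n (m + j) * (INR m + 1)
  >= binom_half_pmf n m * (INR m + 1 - INR j ^ 2).
Proof.
  intros Hn; induction j as [|j IH]; intros Hj.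
  - rewrite Nat.add_0_r; simpl; lra.
  - specialize (IH ltac:(nia)).
    assert (Hstep : binom_half_pmf n (S (m + j))
                    = INR (n - (m + j)) / INR (S (m + j)) * binom_half_pmf n (m + j)).
    { unfold binom_half_pmf; rewrite pascal_step3 by nia; unfold Rdiv; ring. }
    rewrite <- plus_n_Sm, Hstep.
    assert (HJ : 4 * (INR j + 1) ^ 2 <= INR m + 1).
    { apply le_INR in Hj; rewrite !mult_INR, !S_INR, plus_INR in Hj; simpl INR in Hj; lra. }
    assert (HN : INR m - INR j <= INR (n - (m + j))).
    { rewrite minus_INR, plus_INR by nia. apply le_INR in Hn.
      rewrite mult_INR in Hn; simpl INR in Hn; lra. }
    rewrite S_INR, plus_INR, S_INR.
    pose proof (pos_INR j); pose proof (pos_INR m); pose proof (binom_half_pmf_pos n m);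
      pose proof (binom_half_pmf_pos n (m + j)).
    set (P := binom_half_pmf n (m + j)) in *; set (B := binom_half_pmf n m) in *;
      set (M := INR m) in *; set (J := INR j) in *; set (K := INR (n - (m + j))) in *.
    replace (K / (M + J + 1) * P * (M + 1)) with (K * (P * (M + 1)) / (M + J + 1))
      by (field; lra).
    apply Rle_ge, Rmult_le_reg_r with (M + J + 1); [lra|].
    replace (K * (P * (M + 1)) / (M + J + 1) * (M + J + 1)) with (K * (P * (M + 1)))
      by (field; lra).
    assert (Hprev : (M - J) * (B * (M + 1 - J ^ 2)) <= K * (P * (M + 1))).
    { apply Rmult_le_compat; [nra | nra | lra | lra]. }
    (* (M+1-J^2)(M-J) - (M+1-(J+1)^2)(M+J+1) = (2J+1)(J+J^2) >= 0 *)
    assert (0 <= B * ((2 * J + 1) * (J + J ^ 2))) by (apply Rmult_le_pos; nra).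
    nra.
Qed.

Lemma binom_half_pmf_window_ge n m j :
  (2 * m <= n)%nat -> (4 * j * j <= m + 1)%nat ->
  3/4 * binom_half_pmf n m <= binom_half_pmf n (m + j).
Proof.
  intros Hn Hj.
  pose proof (binom_half_pmf_shift_ge n m j Hn Hj).
  apply le_INR in Hj; rewrite !mult_INR, plus_INR in Hj; simpl INR in Hj.
  pose proof (pos_INR m); pose proof (binom_half_pmf_pos n m); nra.
Qed.

Lemma dlap_pmf_ge eps z r :
  0 < eps <= 1/2 -> Rabs (IZR z) <= r -> eps / 3 * exp (- eps * r) <= dlap_pmf eps z.
Proof.
  intros Heps Hz; unfold dlap_pmf.
  assert (Hsmall : exp eps < 2).
  { assert (exp eps <= exp (1/2)) by (apply exp_le_compat; lra).
    assert (exp (1/2) * exp (1/2) <= 3)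
      by (rewrite <- exp_plus; replace (1/2 + 1/2) with 1 by lra; apply exp_le_3).
    pose proof (exp_pos (1/2)); nra. }
  pose proof (exp_ineq1_le eps).
  apply Rmult_le_compat.
  - lra.
  - apply Rlt_le, exp_pos.
  - apply Rmult_le_reg_r with (exp eps + 1); [lra|].
    replace ((exp eps - 1) / (exp eps + 1) * (exp eps + 1)) with (exp eps - 1)
      by (field; lra).
    nra.
  - apply exp_le_compat. pose proof (Rabs_pos (IZR z)); nra.
Qed.

Lemma sum_f_R0_window_le f N m t :
  (forall i, 0 <= f i) -> (m + t <= N)%nat ->
  sum_f_R0 (fun j => f (m + j)%nat) t <= sum_f_R0 f N.
Proof.
  revert f N; induction m as [|m IH]; intros f N Hf Hmt.
  - change (sum_f_R0 f t <= sum_f_R0 f N).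
    induction N as [|N IHN].
    + replace t with 0%nat by lia; lra.
    + destruct (Nat.eq_dec t (S N)) as [->|Ht]; [lra|].
      rewrite tech5. specialize (Hf (S N)). specialize (IHN ltac:(lia)). lra.
  - rewrite (decomp_sum f N) by lia.
    specialize (IH (fun i => f (S i)) (Init.Nat.pred N) (fun i => Hf (S i)) ltac:(lia)).
    specialize (Hf 0%nat); simpl in IH |- *; lra.
Qed.

Lemma prob_Y_eq_ge_window d eps m t k :
  0 < eps <= 1/2 -> (2 * m <= d - 1)%nat -> (4 * t * t <= m + 1)%nat ->
  (m <= k <= m + 1)%nat ->
  (INR t + 1) * binom_half_pmf (d - 1) m * eps * exp (- eps * (INR t + 1)) / 4
  <= prob_Y_eq d eps (Z.of_nat k).
Proof.
  intros Heps Hm Ht Hk; unfold prob_Y_eq.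
  set (f := fun x => binom_half_pmf (d - 1) x * dlap_pmf eps (Z.of_nat k - Z.of_nat x)).
  assert (Hterm : forall j, (j <= t)%nat ->
    3/4 * binom_half_pmf (d - 1) m * (eps / 3 * exp (- eps * (INR t + 1))) <= f (m + j)%nat).
  { intros j Hj; unfold f.
    apply Rmult_le_compat.
    - pose proof (binom_half_pmf_pos (d - 1) m); lra.
    - pose proof (exp_pos (- eps * (INR t + 1))); nra.
    - apply binom_half_pmf_window_ge; nia.
    - apply dlap_pmf_ge; [lra|].
      apply Rabs_le; rewrite INR_IZR_INZ, <- plus_IZR, <- opp_IZR.
      split; apply IZR_le; lia. }
  assert (Hf : forall i, 0 <= f i).
  { intros i; unfold f, dlap_pmf.
    pose proof (binom_half_pmf_pos (d - 1) i); pose proof (exp_ineq1_le eps).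
    pose proof (exp_pos (- eps * Rabs (IZR (Z.of_nat k - Z.of_nat i)))).
    apply Rmult_le_pos; [lra|].
    apply Rmult_le_pos; [apply Rlt_le, Rdiv_lt_0_compat|]; lra. }
  eapply Rle_trans; [|apply (sum_f_R0_window_le f _ m t Hf); nia].
  set (L := 3/4 * binom_half_pmf (d - 1) m * (eps / 3 * exp (- eps * (INR t + 1)))) in Hterm.
  apply Rle_trans with (sum_f_R0 (fun _ => L) t); [rewrite sum_cte, S_INR; unfold L; lra|].
  apply sum_Rle; exact Hterm.
Qed.

Lemma nat_pred_last (P : nat -> Prop) B :
  P 0%nat -> (forall t, P t -> (t <= B)%nat) -> exists t, P t /\ ~ P (S t).
Proof.
  intros H0 HB; apply NNPP; intros Hno.
  assert (Hall : forall t, P t).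
  { induction t as [|t IH]; [exact H0|].
    apply NNPP; intros HS; apply Hno; exists t; auto. }
  specialize (HB (S B) (Hall (S B))); lia.
Qed.

Lemma window_radius eps m :
  0 < eps -> exists t, (4 * t * t <= m + 1)%nat /\ eps * INR t <= 1 /\
    (1 < eps * (INR t + 1) \/ INR m + 1 < 4 * (INR t + 1) ^ 2).
Proof.
  intros Heps.
  destruct (nat_pred_last (fun t => (4 * t * t <= m + 1)%nat /\ eps * INR t <= 1) (m + 1))
    as (t & [Ht Hepst] & Hlast).
  - split; [lia | simpl; lra].
  - intros t [Ht _]; nia.
  - exists t; repeat split; auto.
    rewrite S_INR in Hlast.
    destruct (Rlt_or_le 1 (eps * (INR t + 1))) as [Hbig|Hsmall]; [now left|right].
    destruct (le_lt_dec (4 * S t * S t) (m + 1)) as [Hle|Hgt]; [now exfalso; auto|].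
    apply lt_INR in Hgt; rewrite !mult_INR, plus_INR, (S_INR t) in Hgt.
    replace (INR 4) with 4 in Hgt by (simpl; lra); simpl INR in Hgt; nra.
Qed.

Lemma window_mass_sq_ge b T eps N M :
  0 <= M -> N <= 2 * M + 2 -> 0 < eps -> b ^ 2 * N >= 1/3 ->
  (1 < eps * T \/ M + 1 < 4 * T ^ 2) ->
  1/24 <= b ^ 2 * T ^ 2 * (eps ^ 2 * N + 1).
Proof.
  intros HM HN Heps Hb [Hbig|Hradius].
  - assert (1 <= (eps * T) ^ 2) by nra. nra.
  - assert (0 <= b ^ 2) by nra. assert (0 <= eps ^ 2 * N) by nra. nra.
Qed.

Lemma Rdiv_sqrt_le x c D : 0 < D -> 0 <= x -> c ^ 2 <= x ^ 2 * D -> c / sqrt D <= x.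
Proof.
  intros HD Hx Hc.
  pose proof (sqrt_lt_R0 D HD) as Hs.
  apply Rmult_le_reg_r with (sqrt D); [exact Hs|].
  replace (c / sqrt D * sqrt D) with c by (field; lra).
  apply Rsqr_incr_0_var; [|nra].
  unfold Rsqr; replace (x * sqrt D * (x * sqrt D)) with (x ^ 2 * (sqrt D * sqrt D)) by ring.
  rewrite sqrt_sqrt; nra.
Qed.

Lemma window_mass_ge_div_sqrt b T eps N :
  0 < b -> 1 <= T -> 0 < eps -> 0 <= N -> 1/24 <= b ^ 2 * T ^ 2 * (eps ^ 2 * N + 1) ->
  exp (-2) / 20 / sqrt (N + 1 / eps ^ 2) <= T * b * eps * exp (-2) / 4.
Proof.
  intros Hb HT Heps HN Hmass.
  pose proof (exp_pos (-2)).
  assert (0 < 1 / eps ^ 2) by (apply Rdiv_lt_0_compat; nra).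
  apply Rdiv_sqrt_le; [lra | |].
  - apply Rlt_le, Rdiv_lt_0_compat; [repeat apply Rmult_lt_0_compat|]; lra.
  - replace ((T * b * eps * exp (-2) / 4) ^ 2 * (N + 1 / eps ^ 2))
      with (exp (-2) ^ 2 / 16 * (b ^ 2 * T ^ 2 * (eps ^ 2 * N + 1))) by (field; lra).
    nra.
Qed.

Lemma ceil_half_bounds n :
  exists m, (2 * m <= n <= 2 * m + 1)%nat /\ (m <= ceil_half n <= m + 1)%nat.
Proof.
  unfold ceil_half.
  destruct (Nat.Even_or_Odd n) as [[m ->]|[m ->]]; exists m; split; try lia.
  - rewrite <- (Nat.div_unique (2 * m + 1) 2 m 1); lia.
  - rewrite <- (Nat.div_unique (2 * m + 1 + 1) 2 (m + 1) 0); lia.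
Qed.

Theorem lemma5p4 :
  exists c0 : R, 0 < c0 /\
  exists c : R, 0 < c /\
  forall (d : nat) (eps : R),
    (1 <= d)%nat -> 0 < eps -> eps <= c0 ->
    prob_Y_eq d eps (Z.of_nat (ceil_half (d - 1))) >= c / sqrt (INR d + 1 / eps ^ 2).
Proof.
  exists (1/2); split; [lra|].
  exists (exp (-2) / 20); split; [pose proof (exp_pos (-2)); lra|].
  intros d eps Hd Heps Heps_le.
  destruct (ceil_half_bounds (d - 1)) as (m & Hm & Hk).
  destruct (window_radius eps m Heps) as (t & Ht & Hepst & Hstop).
  pose proof (prob_Y_eq_ge_window d eps m t _ (conj Heps Heps_le) ltac:(lia) Ht Hk) as Hwin.
  assert (HdN : INR d = INR (d - 1) + 1) by (rewrite <- S_INR; f_equal; lia).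
  assert (HNM : INR d <= 2 * INR m + 2).
  { rewrite HdN; apply proj2, le_INR in Hm; rewrite plus_INR, mult_INR in Hm; simpl INR in Hm; lra. }
  pose proof (binom_half_pmf_central_sq (d - 1) m Hm) as Hcentral; rewrite <- HdN in Hcentral.
  pose proof (binom_half_pmf_pos (d - 1) m); pose proof (pos_INR t); pose proof (pos_INR d).
  set (b := binom_half_pmf (d - 1) m) in *; set (T := INR t + 1) in *.
  pose proof (window_mass_sq_ge b T eps (INR d) (INR m) (pos_INR m) HNM Heps Hcentral Hstop).
  apply Rle_ge, Rle_trans with (T * b * eps * exp (-2) / 4).
  - apply window_mass_ge_div_sqrt; unfold T in *; lra.
  - eapply Rle_trans; [|exact Hwin].
    assert (HE : exp (-2) <= exp (- eps * T)) by (apply exp_le_compat; unfold T; lra).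
    assert (0 < T * b * eps) by (unfold T; apply Rmult_lt_0_compat; [apply Rmult_lt_0_compat|]; lra).
    apply Rmult_le_compat_r; [lra|]. apply Rmult_le_compat_l; lra.
Qed.
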